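(* Let $k\geq 0$. Then \[ H_k(x)=\sum_{i=0}^{k+1}\sum_{j=0}^{2k+1}h_k(i,j)\,x^{2(k+1)i+j}, \] where $h_k(i,j)=t_k(k+1-i,\,k-j)$ for $0\leq i\leq k+1$, $0\leq j\leq k$, and $h_k(i,j)=t_k(i,\,j-k-1)$ for $0\leq i\leq k+1$, $k+1\leq j\leq 2k+1$. (That is, the $(k+2)\times 2(k+1)$ coefficient array of $H_k$ is obtained from the $(k+2)\times(k+1)$ array $t_k$ by placing a $180^\circ$ rotation of $t_k$ in front of $t_k$.)
   Context: $B_n(y)=\sum_{\pi\in B_n}y^{\mathrm{des}_B(\pi)}$ is the type $B$ Eulerian polynomial: $B_n$ is the set of signed permutations $\pi_1\cdots\pi_n$ of $[n]$, and with $\pi_0=0$, $\mathrm{des}_B(\pi)$ counts $i\in\{0,\dots,n-1\}$ with $\pi_i>\pi_{i+1}$; $B_0=1$. Define \[\widetilde T_k(x)=\sum_{l=0}^{k}B_{k-l}(x^{k+1})(x^{k+1}-1)^l\sum_{i=l}^{k}\binom{i}{l}x^{k-i},\] and for $0\le i\le k+1$, $0\le j\le k$ let $t_k(i,j)$ be the coefficient of $x^{(k+1)i+j}$ in $\widetilde T_k(x)$. Define \[H_k(x)=\sum_{l=0}^{k}B_{k-l}(x^{2k+2})(x^{2k+2}-1)^l\sum_{s=l}^{k}\binom{s}{l}x^{2k+1-s}+\sum_{l=0}^{k}B_{k-l}(x^{-2k-2})(x^{-2k-2}-1)^l\sum_{s=l}^{k}\binom{s}{l}x^{2(k+1)^2+s}.\]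 *)

From mathcomp Require Import all_boot all_order all_algebra all_fingroup.
Set Implicit Arguments. Unset Strict Implicit. Unset Printing Implicit Defensive.
Import Order.TTheory GRing.Theory Num.Theory.
Local Open Scope ring_scope.

(* A signed permutation of [n] is a pair (sigma, eps): pi_{i+1} = (-1)^{eps i} (sigma i + 1)
   for i : 'I_n (0-indexed positions, 1-indexed values). *)
Definition signed_perm (n : nat) := ('S_n * {ffun 'I_n -> bool})%type.

(* pi_j as an integer, with pi_0 = 0 (and 0 beyond n, never used). *)
Definition spval (n : nat) (p : signed_perm n) (j : nat) : int :=
  if j is j'.+1 then
    match (insub j' : option 'I_n) with
    | Some o => (if p.2 o then -1 else 1) * ((p.1 o).+1)%:Z
    | None => 0
    end
  else 0.

Definition desB (n : nat) (p : signed_perm n) : nat :=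
  #|[set i : 'I_n | spval p i.+1 < spval p i]|.

Definition Beul {R : comNzRingType} (n : nat) (y : R) : R :=
  \sum_(p : signed_perm n) y ^+ desB p.

Definition Ttilde (k : nat) : {poly int} :=
  \sum_(l < k.+1) Beul (k - l) ('X^(k.+1)) * ('X^(k.+1) - 1) ^+ l *
     \sum_(l <= i < k.+1) ('C(i, l))%:R * 'X^(k - i).

Definition tk (k i j : nat) : int := (Ttilde k)`_((k.+1) * i + j).

(* the indeterminate x in the field of rational functions Q(x) ⊇ Z[x, x^-1] *)
Definition xF : {fraction {poly int}} := tofrac ('X : {poly int}).

Definition Hk (k : nat) : {fraction {poly int}} :=
  \sum_(l < k.+1) Beul (k - l) (xF ^+ (2 * k + 2)) * (xF ^+ (2 * k + 2) - 1) ^+ l *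
     \sum_(l <= s < k.+1) ('C(s, l))%:R * xF ^+ (2 * k + 1 - s)
  + \sum_(l < k.+1) Beul (k - l) (xF ^- (2 * k + 2)) * (xF ^- (2 * k + 2) - 1) ^+ l *
     \sum_(l <= s < k.+1) ('C(s, l))%:R * xF ^+ (2 * (k.+1) ^ 2 + s).

Definition hk (k i j : nat) : int :=
  if (j <= k)%N then tk k (k.+1 - i) (k - j) else tk k i (j - k.+1).

From mathcomp Require Import all_boot all_order all_algebra all_fingroup.
From mathcomp Require Import ring zify.
Import Order.TTheory GRing.Theory Num.Theory.
Local Open Scope ring_scope.

(* Put G(y, z) = Tbiv k y z := sum_l B_(k-l)(y) (y - 1)^l sum_(i=l..k) C(i, l) z^(k-i),
   so that T~_k(x) = G(x^(k+1), x).  As G has z-degree at most k, writing exponents in base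
   k+1 separates its monomials y^a z^b, hence G(y, z) = sum_(a,b) t_k(a, b) y^a z^b
   in any commutative ring.  The two halves of H_k are x^(k+1) G(x^(2k+2), x) and
   x^(2(k+1)^2+k) G(x^(-2k-2), x^-1): the first is t_k shifted to columns
   k+1..2k+1, the second, after a -> k+1-a and b -> k-b, its 180 degree rotation. *)

Lemma coef_sum_comp_Xn_mulXn (R : nzSemiRingType) d (Q : nat -> {poly R}) a c :
  (c < d)%N -> (\sum_(b < d) (Q b \Po 'X^d) * 'X^b)`_(d * a + c) = (Q c)`_a.
Proof.
move=> ltcd; have d_gt0 : (0 < d)%N by apply: leq_ltn_trans ltcd.
rewrite coef_sum (bigD1 (Ordinal ltcd)) //= big1 ?addr0 => [|b neq_bc].
  by rewrite coefMXn ltnNge leq_addl /= addnK coef_comp_poly_Xn // dvdn_mulr // mulKn.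
rewrite coefMXn; case: ltnP => // le_b; rewrite coef_comp_poly_Xn //.
case: ifP => // /dvdnP[q /(congr1 (addn^~ b))]; rewrite subnK // => /(congr1 (modn^~ d)).
rewrite mulnC !modnMDl !modn_small // => eq_bc.
by move: neq_bc; rewrite -val_eqE /= eq_bc eqxx.
Qed.

Definition Tbiv {R : comNzRingType} k (y z : R) : R :=
  \sum_(l < k.+1) Beul (k - l) y * (y - 1) ^+ l *
     \sum_(l <= i < k.+1) ('C(i, l))%:R * z ^+ (k - i).

Definition Tcol k b : {poly int} :=
  \sum_(l < k.+1) ('C(k - b, l))%:R *: (Beul (k - l) 'X * ('X - 1) ^+ l).

Lemma horner_map_Beul (R : comNzRingType) n (y : R) :
  (map_poly intr (Beul n 'X)).[y] = Beul n y.
Proof.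
rewrite /Beul rmorph_sum horner_sum; apply: eq_bigr => p _.
by rewrite rmorphXn /= map_polyX hornerXn.
Qed.

Lemma horner_map_Tcol (R : comNzRingType) k b (y : R) :
  (map_poly intr (Tcol k b)).[y] =
  \sum_(l < k.+1) ('C(k - b, l))%:R * (Beul (k - l) y * (y - 1) ^+ l).
Proof.
rewrite rmorph_sum horner_sum; apply: eq_bigr => l _.
rewrite [X in X.[y]]/= map_polyZ rmorphM rmorphXn rmorphB /= map_polyX rmorph1 rmorph_nat.
by rewrite hornerZ hornerM horner_exp hornerXsubC horner_map_Beul.
Qed.

Lemma Tbiv_cols (R : comNzRingType) k (y z : R) :
  Tbiv k y z = \sum_(b < k.+1) (map_poly intr (Tcol k b)).[y] * z ^+ b.
Proof.
under [RHS]eq_bigr => b _ do rewrite horner_map_Tcol mulr_suml.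
rewrite exchange_big; apply: eq_bigr => l _.
rewrite big_geq_mkord big_mkcondr mulr_sumr (reindex_inj rev_ord_inj).
apply: eq_bigr => b _.
have -> : nat_of_ord (rev_ord b) = (k - b)%N by rewrite /= subSS.
rewrite subKn; last by rewrite -ltnS.
case: leqP => [_|lt_bl]; first by ring.
by rewrite bin_small // mulr0 !mul0r.
Qed.

Lemma horner_map_intr_poly (p q : {poly int}) : (map_poly intr p).[q] = p \Po q.
Proof.
rewrite /comp_poly; congr horner; apply: eq_map_poly => z /=.
by rewrite -(rmorph_int polyC) intz.
Qed.

Lemma Ttilde_Tcol k :
  Ttilde k = \sum_(b < k.+1) (Tcol k b \Po 'X^(k.+1)) * 'X^b.
Proof.
have -> : Ttilde k = Tbiv k 'X^(k.+1) 'X by [].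
by rewrite Tbiv_cols; apply: eq_bigr => b _; rewrite horner_map_intr_poly.
Qed.

Lemma tk_Tcol k a b : (b < k.+1)%N -> tk k a b = (Tcol k b)`_a.
Proof. by move=> lt_bk; rewrite /tk Ttilde_Tcol coef_sum_comp_Xn_mulXn. Qed.

Lemma size_Beul (R : comNzRingType) n : (size (Beul n ('X : {poly R})) <= n.+1)%N.
Proof.
apply: leq_trans (size_sum _ _ _) _; apply/bigmax_leqP => p _.
rewrite size_polyXn ltnS; apply: leq_trans (max_card _) _.
by rewrite card_ord.
Qed.

Lemma size_Tcol k b : (size (Tcol k b) <= k.+1)%N.
Proof.
apply: leq_trans (size_sum _ _ _) _; apply/bigmax_leqP => l _.
apply: leq_trans (size_scale_leq _ _) _; apply: leq_trans (size_polyMleq _ _) _.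
have size_XsubV : (size (('X - 1 : {poly int}) ^+ l) <= l.+1)%N.
  by apply: leq_trans (size_poly_exp_leq _ _) _; rewrite -polyC1 size_XsubC mul1n.
rewrite -subn1 leq_subLR; apply: leq_trans (leq_add (size_Beul _ _) size_XsubV) _.
have := ltn_ord l; lia.
Qed.

Lemma Tbiv_digits (R : comNzRingType) k (y z : R) :
  Tbiv k y z = \sum_(a < k.+2) \sum_(b < k.+1) (tk k a b)%:~R * (y ^+ a * z ^+ b).
Proof.
rewrite Tbiv_cols exchange_big; apply: eq_bigr => b _.
have size_b : (size (map_poly intr (Tcol k b) : {poly R}) <= k.+2)%N.
  exact: leq_trans (size_poly _ _) (leqW (size_Tcol k b)).
rewrite (horner_coef_wide _ size_b) mulr_suml; apply: eq_bigr => a _.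
by rewrite coef_map /= tk_Tcol // mulrA.
Qed.

Lemma xF_neq0 : xF != 0.
Proof. by rewrite tofrac_eq0 polyX_eq0. Qed.

Lemma mulr_expVnXn (F : fieldType) (x : F) m n :
  x != 0 -> (m <= n)%N -> x ^- m * x ^+ n = x ^+ (n - m).
Proof. by move=> x_neq0 le_mn; rewrite mulrC exprB // unitfE. Qed.

Lemma Hk_Tbiv k :
  Hk k = Tbiv k (xF ^+ (2 * k + 2)) xF * xF ^+ k.+1
       + Tbiv k (xF ^- (2 * k + 2)) xF^-1 * xF ^+ (2 * k.+1 ^ 2 + k).
Proof.
rewrite /Hk /Tbiv !mulr_suml; congr (_ + _); apply: eq_bigr => l _;
  rewrite -[RHS]mulrA mulr_suml; congr (_ * _); apply: eq_big_nat => s /andP[_ lt_sk];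
  rewrite -[RHS]mulrA; congr (_ * _).
  by rewrite -exprD; congr (_ ^+ _); lia.
rewrite exprVn mulr_expVnXn ?xF_neq0 //; last by lia.
by congr (_ ^+ _); lia.
Qed.

Lemma Tbiv_right_block k :
  Tbiv k (xF ^+ (2 * k + 2)) xF * xF ^+ k.+1 =
  \sum_(i < k.+2) \sum_(j < k.+1)
     (hk k i (k.+1 + j))%:~R * xF ^+ (2 * k.+1 * i + (k.+1 + j)).
Proof.
rewrite Tbiv_digits mulr_suml; apply: eq_bigr => i _.
rewrite mulr_suml; apply: eq_bigr => j _.
rewrite /hk ifN; last by rewrite -ltnNge leq_addr.
rewrite addKn -mulrA -exprM -!exprD.
by congr (_ * _ ^+ _); lia.
Qed.

Lemma Tbiv_left_block k :
  Tbiv k (xF ^- (2 * k + 2)) xF^-1 * xF ^+ (2 * k.+1 ^ 2 + k) =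
  \sum_(i < k.+2) \sum_(j < k.+1) (hk k i j)%:~R * xF ^+ (2 * k.+1 * i + j).
Proof.
rewrite Tbiv_digits mulr_suml [RHS](reindex_inj rev_ord_inj); apply: eq_bigr => i _.
rewrite mulr_suml [RHS](reindex_inj rev_ord_inj); apply: eq_bigr => j _.
have le_ik : (i <= k.+1)%N by rewrite -ltnS.
have le_jk : (j <= k)%N by rewrite -ltnS.
have -> : nat_of_ord (rev_ord i) = (k.+1 - i)%N by rewrite /= subSS.
have -> : nat_of_ord (rev_ord j) = (k - j)%N by rewrite /= subSS.
rewrite /hk leq_subr !subKn // -mulrA !exprVn -exprM -invfM -exprD.
rewrite mulr_expVnXn ?xF_neq0 //; last by nia.
by congr (_ * _ ^+ _); nia.
Qed.

Theorem lemma3p1 (k : nat) :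
  Hk k = \sum_(i < k.+2) \sum_(j < 2 * k + 2)
           (hk k i j)%:~R * xF ^+ (2 * (k.+1) * i + j).
Proof.
have two_blocks : (2 * k + 2 = k.+1 + k.+1)%N by lia.
rewrite Hk_Tbiv Tbiv_left_block Tbiv_right_block addrC -big_split.
by apply: eq_bigr => i _; rewrite two_blocks big_split_ord.
Qed.
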